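(* Let $X_1,\dots,X_k$ be normal terms, let $f\in\Sigma_E$ have arity $k$, and let $\Pi$ be a cut-free derivation in $\mathcal S$ of $\Gamma,\downarrow f(X_1,\dots,X_k)\vdash M$. Then there exists a cut-free derivation $\Pi'$ in $\mathcal S$ of $\Gamma,X_1,\dots,X_k\vdash M$.
   Context: Fix names, variables and constructors $\mathsf{pub}$ (unary), $\mathsf{sign},\mathsf{blind},\langle\cdot,\cdot\rangle,\{\cdot\}_\cdot$ (binary). $E$ is the union of AC-convergent equational theories $E_1,\dots,E_n$ with pairwise disjoint signatures, disjoint from the constructors, each with at most one associative-commutative (AC) binary symbol $\oplus_i$; $E$ is presented by a rewrite system $R_E$ terminating and confluent modulo AC; $\Sigma_E$ is its signature. Terms are ground terms over names, the constructors and $\Sigma_E$; $\downarrow N$ is the $R_E$-normal form of $N$ modulo AC, and normal terms are those in normal form. $\equiv$ is equality modulo AC of all $\oplus_i$; $\approx_E$ equality modulo $E$. Guarded term: a name, a variable, or headed by a constructor. $E$-context: term with holes built only from symbols of $\Sigma_E$. Sequents $\Gamma\vdash M$ have all terms in normal form; $\Gamma,M$ means $\Gamma\cup\{M\}$. A derivation is cut-free if it has no instance of (cut). System $\mathcal S$: (id) $\Gamma\vdash M$ with no premise if $M\approx_E C[M_1,\dots,M_k]$ for an $E$-context $C$ and $M_i\in\Gamma$; (cut) from $\Gamma\vdash M$, $\Gamma,M\vdash T$ infer $\Gamma\vdash T$; ($p_L$) from $\Gamma,\langle M,N\rangle,M,N\vdash T$ infer $\Gamma,\langle M,N\rangle\vdash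 T$; ($p_R$) from $\Gamma\vdash M,\Gamma\vdash N$ infer $\Gamma\vdash\langle M,N\rangle$; ($e_L$) from $\Gamma,\{M\}_K\vdash K$ and $\Gamma,\{M\}_K,M,K\vdash N$ infer $\Gamma,\{M\}_K\vdash N$; ($e_R$) from $\Gamma\vdash M,\Gamma\vdash K$ infer $\Gamma\vdash\{M\}_K$; ($\mathsf{sign}_L$) from $\Gamma,\mathsf{sign}(M,K),\mathsf{pub}(L),M\vdash N$ infer $\Gamma,\mathsf{sign}(M,K),\mathsf{pub}(L)\vdash N$ if $K\equiv L$; ($\mathsf{sign}_R$) from $\Gamma\vdash M,\Gamma\vdash K$ infer $\Gamma\vdash\mathsf{sign}(M,K)$; ($\mathsf{blind}_{L1}$) from $\Gamma,\mathsf{blind}(M,K)\vdash K$ and $\Gamma,\mathsf{blind}(M,K),M,K\vdash N$ infer $\Gamma,\mathsf{blind}(M,K)\vdash N$; ($\mathsf{blind}_R$) from $\Gamma\vdash M,\Gamma\vdash K$ infer $\Gamma\vdash\mathsf{blind}(M,K)$; ($\mathsf{blind}_{L2}$) from $\Gamma,\mathsf{sign}(\mathsf{blind}(M,R),K)\vdash R$ and $\Gamma,\mathsf{sign}(\mathsf{blind}(M,R),K),\mathsf{sign}(M,K),R\vdash N$ infer $\Gamma,\mathsf{sign}(\mathsf{blind}(M,R),K)\vdash N$; ($gs$) from $\Gamma\vdash A$, $\Gamma,A\vdash M$ infer $\Gamma\vdash M$ if $A$ is a guarded subterm of a term in $\Gamma\cup\{M\}$. *)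

From Stdlib Require Import List Relations.
Import ListNotations.
Set Implicit Arguments.

(* Names are represented by natural numbers.  [Enc M K] is {M}_K,
   [Pair M N] is <M,N>.  [App f ts] applies a symbol f of Sigma_E. *)
Inductive term (F : Type) : Type :=
| Name : nat -> term F
| Pub : term F -> term F
| Sign : term F -> term F -> term F
| Blind : term F -> term F -> term F
| Pair : term F -> term F -> term F
| Enc : term F -> term F -> term F
| App : F -> list (term F) -> term F.
Arguments Name {F} _.

(** Patterns over Sigma_E with variables (used for rewrite rules and
    E-contexts, whose holes are the variables). *)
Inductive pat (F : Type) : Type :=
| PVar : nat -> pat F
| PApp : F -> list (pat F) -> pat F.
Arguments PVar {F} _.

Fixpoint inst (F : Type) (s : nat -> term F) (p : pat F) : term F :=
  match p with
  | PVar i => s i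
  | PApp f ps => App f (map (inst s) ps)
  end.

Fixpoint pvars (F : Type) (p : pat F) : list nat :=
  match p with
  | PVar i => [i]
  | PApp _ ps => flat_map (@pvars F) ps
  end.

Fixpoint pall (F : Type) (P : F -> Prop) (p : pat F) : Prop :=
  match p with
  | PVar _ => True
  | PApp f ps => P f /\ fold_right (fun q acc => pall P q /\ acc) True ps
  end.

Record theory := {
  sym : Type;
  ar : sym -> nat;
  isAC : sym -> Prop;
  comp : sym -> nat;                 (* f belongs to the signature of E_(comp f) *)
  rules : pat sym -> pat sym -> Prop
}.

Section Theory.
Variable T : theory.
Notation F := (sym T).
Notation tm := (term F).

Fixpoint wf (t : tm) : Prop :=
  match t with
  | Name _ => True
  | Pub a => wf a
  | Sign a b | Blind a b | Pair a b | Enc a b => wf a /\ wf b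
  | App f ts => length ts = ar T f /\ fold_right (fun u acc => wf u /\ acc) True ts
  end.

Fixpoint wfp (p : pat F) : Prop :=
  match p with
  | PVar _ => True
  | PApp f ps => length ps = ar T f /\ fold_right (fun q acc => wfp q /\ acc) True ps
  end.

Inductive acEq : tm -> tm -> Prop :=
| ac_refl t : acEq t t
| ac_sym t u : acEq t u -> acEq u t
| ac_trans t u v : acEq t u -> acEq u v -> acEq t v
| ac_pub a b : acEq a b -> acEq (Pub a) (Pub b)
| ac_sign a b c d : acEq a b -> acEq c d -> acEq (Sign a c) (Sign b d)
| ac_blind a b c d : acEq a b -> acEq c d -> acEq (Blind a c) (Blind b d)
| ac_pair a b c d : acEq a b -> acEq c d -> acEq (Pair a c) (Pair b d)
| ac_enc a b c d : acEq a b -> acEq c d -> acEq (Enc a c) (Enc b d)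
| ac_app f l a b r : acEq a b -> acEq (App f (l ++ a :: r)) (App f (l ++ b :: r))
| ac_comm f a b : isAC T f -> acEq (App f [a; b]) (App f [b; a])
| ac_assoc f a b c : isAC T f ->
    acEq (App f [a; App f [b; c]]) (App f [App f [a; b]; c]).

Inductive cstep (Rs : pat F -> pat F -> Prop) : tm -> tm -> Prop :=
| cs_root l r s : Rs l r -> cstep Rs (inst s l) (inst s r)
| cs_pub a b : cstep Rs a b -> cstep Rs (Pub a) (Pub b)
| cs_sign1 a b c : cstep Rs a b -> cstep Rs (Sign a c) (Sign b c)
| cs_sign2 a b c : cstep Rs a b -> cstep Rs (Sign c a) (Sign c b)
| cs_blind1 a b c : cstep Rs a b -> cstep Rs (Blind a c) (Blind b c)
| cs_blind2 a b c : cstep Rs a b -> cstep Rs (Blind c a) (Blind c b)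
| cs_pair1 a b c : cstep Rs a b -> cstep Rs (Pair a c) (Pair b c)
| cs_pair2 a b c : cstep Rs a b -> cstep Rs (Pair c a) (Pair c b)
| cs_enc1 a b c : cstep Rs a b -> cstep Rs (Enc a c) (Enc b c)
| cs_enc2 a b c : cstep Rs a b -> cstep Rs (Enc c a) (Enc c b)
| cs_app f l a b r : cstep Rs a b -> cstep Rs (App f (l ++ a :: r)) (App f (l ++ b :: r)).

Definition rstep (Rs : pat F -> pat F -> Prop) (t s : tm) : Prop :=
  exists t' s', acEq t t' /\ cstep Rs t' s' /\ acEq s' s.

Definition terminating_AC (Rs : pat F -> pat F -> Prop) : Prop :=
  well_founded (fun s t => rstep Rs t s).

Definition confluent_AC (Rs : pat F -> pat F -> Prop) : Prop :=
  forall t s1 s2, clos_refl_trans _ (rstep Rs) t s1 ->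
    clos_refl_trans _ (rstep Rs) t s2 ->
    exists u1 u2, clos_refl_trans _ (rstep Rs) s1 u1 /\
      clos_refl_trans _ (rstep Rs) s2 u2 /\ acEq u1 u2.

Definition normal (t : tm) : Prop := forall s, ~ rstep (rules T) t s.
Definition is_nf (t N : tm) : Prop :=
  clos_refl_trans _ (rstep (rules T)) t N /\ normal N.

Definition eqE : tm -> tm -> Prop :=
  clos_refl_sym_trans _ (fun t u => acEq t u \/ cstep (rules T) t u).

Definition admissible : Prop :=
  (forall f, isAC T f -> ar T f = 2) /\
  (forall f g, isAC T f -> isAC T g -> comp T f = comp T g -> f = g) /\
  (forall l r, rules T l r -> wfp l /\ wfp r /\
      exists i, pall (fun f => comp T f = i) l /\ pall (fun f => comp T f = i) r) /\
  terminating_AC (rules T) /\ confluent_AC (rules T).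

Inductive subterm : tm -> tm -> Prop :=
| st_refl t : subterm t t
| st_pub a t : subterm a t -> subterm a (Pub t)
| st_sign1 a t u : subterm a t -> subterm a (Sign t u)
| st_sign2 a t u : subterm a u -> subterm a (Sign t u)
| st_blind1 a t u : subterm a t -> subterm a (Blind t u)
| st_blind2 a t u : subterm a u -> subterm a (Blind t u)
| st_pair1 a t u : subterm a t -> subterm a (Pair t u)
| st_pair2 a t u : subterm a u -> subterm a (Pair t u)
| st_enc1 a t u : subterm a t -> subterm a (Enc t u)
| st_enc2 a t u : subterm a u -> subterm a (Enc t u)
| st_app a f ts t : In t ts -> subterm a t -> subterm a (App f ts).

Definition guarded (t : tm) : Prop :=
  match t with App _ _ => False | _ => True end.

Definition seq_ok (G : list tm) (M : tm) : Prop :=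
  Forall (fun t => wf t /\ normal t) G /\ wf M /\ normal M.

Definition id_cond (G : list tm) (M : tm) : Prop :=
  exists (C : pat F) (s : nat -> tm),
    wfp C /\ (forall i, In i (pvars C) -> In (s i) G) /\ eqE M (inst s C).

(** System S; [deriv false] = cut-free derivability.  A context
    "Γ, X" in a conclusion is any list containing X. *)
Inductive deriv (cut : bool) : list tm -> tm -> Prop :=
| d_id G M : seq_ok G M -> id_cond G M -> deriv cut G M
| d_cut G M N : cut = true -> seq_ok G N ->
    deriv cut G M -> deriv cut (M :: G) N -> deriv cut G N
| d_pL G M N U : seq_ok G U -> In (Pair M N) G ->
    deriv cut (M :: N :: G) U -> deriv cut G U
| d_pR G M N : seq_ok G (Pair M N) ->
    deriv cut G M -> deriv cut G N -> deriv cut G (Pair M N)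
| d_eL G M K N : seq_ok G N -> In (Enc M K) G ->
    deriv cut G K -> deriv cut (M :: K :: G) N -> deriv cut G N
| d_eR G M K : seq_ok G (Enc M K) ->
    deriv cut G M -> deriv cut G K -> deriv cut G (Enc M K)
| d_signL G M K L N : seq_ok G N -> In (Sign M K) G -> In (Pub L) G ->
    acEq K L -> deriv cut (M :: G) N -> deriv cut G N
| d_signR G M K : seq_ok G (Sign M K) ->
    deriv cut G M -> deriv cut G K -> deriv cut G (Sign M K)
| d_blindL1 G M K N : seq_ok G N -> In (Blind M K) G ->
    deriv cut G K -> deriv cut (M :: K :: G) N -> deriv cut G N
| d_blindR G M K : seq_ok G (Blind M K) ->
    deriv cut G M -> deriv cut G K -> deriv cut G (Blind M K)
| d_blindL2 G M R K N : seq_ok G N -> In (Sign (Blind M R) K) G ->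
    deriv cut G R -> deriv cut (Sign M K :: R :: G) N -> deriv cut G N
| d_gs G M A : seq_ok G M -> guarded A ->
    (exists t, (In t G \/ t = M) /\ subterm A t) ->
    deriv cut G A -> deriv cut (A :: G) M -> deriv cut G M.

End Theory.

From Pilot Require Import Defs.
From Stdlib Require Import List Relations Arith ClassicalEpsilon Classical.
Import ListNotations.
Set Implicit Arguments.

(* Rewriting with R_E only rearranges Sigma_E-symbols above the arguments, so
   some normal form of f(X_1,...,X_k), and by confluence every one up to AC,
   has all its guarded subterms among those of the X_i (up to AC).  One then
   replaces the normal form by X_1,...,X_k throughout the cut-free derivation,
   by induction with a context in which each old formula is either present up
   to AC or an (id)-consequence of the new context with covered guarded
   subterms: (id) axioms compose E-contexts, and when such a formula is the
   principal formula of a left rule it is a guarded subterm of the new context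
   up to AC, which the rule (gs) introduces with an (id) axiom as its left
   premise. *)

Lemma fold_right_and_Forall (A : Type) (P : A -> Prop) (l : list A) :
  fold_right (fun x acc => P x /\ acc) True l <-> Forall P l.
Proof.
  induction l as [|x l IH]; simpl.
  - split; auto.
  - rewrite Forall_cons_iff, IH. reflexivity.
Qed.

Lemma Forall_In (A : Type) (P : A -> Prop) l x : Forall P l -> In x l -> P x.
Proof. rewrite Forall_forall. auto. Qed.
Arguments Forall_In {A P l x}.

Section Patterns.
Variable F : Type.

Fixpoint pat_nested_ind (P : pat F -> Prop) (HV : forall i, P (PVar i))
    (HA : forall f ps, Forall P ps -> P (PApp f ps)) (p : pat F) : P p :=
  match p with
  | PVar i => HV i
  | PApp f ps => HA f ps ((fix go ps := match ps return Forall P ps with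
      | [] => Forall_nil P
      | q :: qs => Forall_cons q (@pat_nested_ind P HV HA q) (go qs) end) ps)
  end.

Fixpoint psubst (sg : nat -> pat F) (p : pat F) : pat F :=
  match p with
  | PVar i => sg i
  | PApp f ps => PApp f (map (psubst sg) ps)
  end.

Definition prename (g : nat -> nat) : pat F -> pat F := psubst (fun i => PVar (g i)).

Lemma inst_psubst (s : nat -> term F) sg p :
  inst s (psubst sg p) = inst (fun i => inst s (sg i)) p.
Proof.
  induction p as [i|f ps IH] using pat_nested_ind; simpl; auto.
  f_equal. rewrite map_map. apply map_ext_in. intros q Hq.
  rewrite Forall_forall in IH. auto.
Qed.

Lemma inst_ext (s s' : nat -> term F) p :
  (forall i, In i (pvars p) -> s i = s' i) -> inst s p = inst s' p.
Proof.
  induction p as [i|f ps IH] using pat_nested_ind; simpl; intros Hs; auto.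
  f_equal. apply map_ext_in. intros q Hq. rewrite Forall_forall in IH.
  apply IH; auto. intros i Hi. apply Hs, in_flat_map. eauto.
Qed.

Lemma in_pvars_psubst sg p j :
  In j (pvars (psubst sg p)) -> exists i, In i (pvars p) /\ In j (pvars (sg i)).
Proof.
  induction p as [i|f ps IH] using pat_nested_ind; simpl; intros Hj; eauto.
  apply in_flat_map in Hj as (q & Hq & Hjq). apply in_map_iff in Hq as (q0 & <- & Hq0).
  rewrite Forall_forall in IH. destruct (IH q0 Hq0 Hjq) as (i & Hi & Hji).
  exists i. split; auto. apply in_flat_map. eauto.
Qed.

End Patterns.

Section Derivations.
Variable T : theory.
Local Notation tm := (term (sym T)).
Local Notation acEq := (acEq T).
Local Notation eqE := (eqE T).
Local Notation cstep := (cstep T (rules T)).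
Local Notation rewrites := (clos_refl_trans _ (rstep T (rules T))).
Local Notation subterm := (subterm T).
Local Notation guarded := (guarded T).
Local Notation normal := (normal T).
Local Notation wf := (wf T).
Local Notation id_cond := (id_cond T).

Lemma wfp_psubst sg p : wfp T p -> (forall i, wfp T (sg i)) -> wfp T (psubst sg p).
Proof.
  induction p as [i|f ps IH] using pat_nested_ind; simpl; intros Hp Hsg; auto.
  destruct Hp as [Hlen Hps]. rewrite length_map. split; auto.
  apply fold_right_and_Forall. apply fold_right_and_Forall in Hps.
  rewrite Forall_forall in *. intros q Hq. apply in_map_iff in Hq as (q0 & <- & Hq0). auto.
Qed.

Lemma eqE_app_arg f l a b r :
  eqE a b -> eqE (App f (l ++ a :: r)) (App f (l ++ b :: r)).
Proof.
  induction 1 as [a b [Hab|Hab]| | |].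
  - apply rst_step. left. apply ac_app. exact Hab.
  - apply rst_step. right. apply cs_app. exact Hab.
  - apply rst_refl.
  - apply rst_sym. assumption.
  - eapply rst_trans; eassumption.
Qed.

Lemma eqE_app_args f l ts us :
  Forall2 eqE ts us -> eqE (App f (l ++ ts)) (App f (l ++ us)).
Proof.
  intros H. revert l. induction H as [|t u ts us Htu _ IH]; intros l.
  - apply rst_refl.
  - eapply rst_trans; [apply eqE_app_arg; exact Htu|].
    specialize (IH (l ++ [u])). rewrite <- !app_assoc in IH. exact IH.
Qed.

Lemma eqE_inst (s s' : nat -> tm) p :
  (forall i, In i (pvars p) -> eqE (s i) (s' i)) -> eqE (inst s p) (inst s' p).
Proof.
  induction p as [i|f ps IH] using pat_nested_ind; simpl; intros Hs; auto.
  apply (eqE_app_args f []). rewrite Forall_forall in IH.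
  assert (Hps : forall q, In q ps -> eqE (inst s q) (inst s' q)).
  { intros q Hq. apply IH; auto. intros i Hi. apply Hs, in_flat_map. eauto. }
  clear IH Hs. induction ps as [|q ps IHps]; simpl; constructor; auto with datatypes.
Qed.

Lemma id_cond_incl G G' M : id_cond G M -> incl G G' -> id_cond G' M.
Proof. intros (C & s & HC & Hs & HM) Hincl. exists C, s. auto. Qed.

Lemma id_cond_eqE G M M' : eqE M' M -> id_cond G M -> id_cond G M'.
Proof.
  intros HM' (C & s & HC & Hs & HM). exists C, s. repeat split; auto.
  eapply rst_trans; eassumption.
Qed.

Lemma id_cond_acEq_mem G t t' : In t' G -> acEq t t' -> id_cond G t.
Proof.
  intros Hin Ht. exists (PVar 0), (fun _ => t'). simpl.
  repeat split; auto. apply rst_step. left. exact Ht.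
Qed.

(* Every hole of [C] filled with [t] receives a copy of [C0]; the holes of
   [C] are renamed to even and those of [C0] to odd variables. *)
Lemma id_cond_cut G t M : id_cond G t -> id_cond (t :: G) M -> id_cond G M.
Proof.
  intros (C0 & s0 & HC0 & Hs0 & Ht) (C & s & HC & Hs & HM).
  set (sg := fun i => if excluded_middle_informative (In (s i) G) then PVar (2 * i)
                      else prename (fun j => 2 * j + 1) C0).
  set (s' := fun k => if Nat.even k then s (Nat.div2 k) else s0 (Nat.div2 k)).
  assert (Hodd : inst s' (prename (fun j => 2 * j + 1) C0) = inst s0 C0).
  { unfold prename. rewrite inst_psubst. apply inst_ext. intros j _.
    cbn [inst]. unfold s'. rewrite Nat.even_odd, Nat.div2_odd'. reflexivity. }
  exists (psubst sg C), s'. repeat split.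
  - apply wfp_psubst; auto. intros i. unfold sg.
    destruct excluded_middle_informative; simpl; auto.
    apply wfp_psubst; simpl; auto.
  - intros j Hj. apply in_pvars_psubst in Hj as (i & Hi & Hj). unfold sg in Hj.
    destruct excluded_middle_informative as [Hin|Hnin].
    + destruct Hj as [<-|[]]. unfold s'. rewrite Nat.even_even, Nat.div2_even. exact Hin.
    + apply in_pvars_psubst in Hj as (k & Hk & [<-|[]]).
      unfold s'. rewrite Nat.even_odd, Nat.div2_odd'. auto.
  - eapply rst_trans; [exact HM|]. rewrite inst_psubst. apply eqE_inst.
    intros i Hi. unfold sg. destruct excluded_middle_informative as [Hin|Hnin].
    + cbn [inst]. unfold s'. rewrite Nat.even_even, Nat.div2_even. apply rst_refl.
    + rewrite Hodd. destruct (Hs i Hi) as [<-|Hin]; [exact Ht|contradiction].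
Qed.

Lemma id_cond_cut_all L G M :
  (forall t, In t L -> id_cond G t) -> id_cond (L ++ G) M -> id_cond G M.
Proof.
  induction L as [|t L IH]; simpl; intros HL HM; auto.
  apply IH; auto. apply id_cond_cut with t.
  - apply id_cond_incl with G; auto. intros x Hx. apply in_or_app. auto.
  - exact HM.
Qed.

Lemma id_cond_app_args Xs f t :
  length Xs = ar T f -> eqE t (App f Xs) -> id_cond Xs t.
Proof.
  intros Hlen Ht.
  exists (PApp f (map PVar (seq 0 (length Xs)))), (fun j => nth j Xs (Name 0)).
  split; [|split].
  - simpl. rewrite length_map, length_seq. split; auto.
    apply fold_right_and_Forall, Forall_forall. intros q Hq.
    apply in_map_iff in Hq as (j & <- & _). exact I.
  - simpl. intros i Hi. apply in_flat_map in Hi as (q & Hq & Hi).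
    apply in_map_iff in Hq as (j & <- & Hj). destruct Hi as [<-|[]].
    apply in_seq in Hj. apply nth_In. apply Hj.
  - simpl. rewrite map_map. simpl.
    replace (map (fun j => nth j Xs (Name 0)) (seq 0 (length Xs))) with Xs; [exact Ht|].
    clear. induction Xs as [|x Xs IH]; simpl; f_equal.
    rewrite <- seq_shift, map_map. exact IH.
Qed.

(* What [acEq] preserves: the head symbol, and the arguments of a constructor up to AC. *)
Definition shape (t u : tm) : Prop :=
  match t, u with
  | Name n, Name m => n = m
  | Pub a, Pub b => acEq a b
  | Sign a c, Sign b d | Blind a c, Blind b d
  | Pair a c, Pair b d | Enc a c, Enc b d => acEq a b /\ acEq c d
  | App _ _, App _ _ => True
  | _, _ => False
  end.

Lemma acEq_shape t u : acEq t u -> shape t u.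
Proof.
  induction 1; simpl; auto.
  - destruct t; simpl; auto using ac_refl.
  - destruct t, u; simpl in *; intuition auto using ac_sym.
  - destruct t, u; simpl in *; try contradiction; destruct v; simpl in *;
      intuition eauto using ac_trans; congruence.
Qed.

Lemma guarded_acEq t u : acEq t u -> guarded t -> guarded u.
Proof. intros H. apply acEq_shape in H. destruct t, u; simpl in *; tauto. Qed.

Lemma wf_acEq t u : acEq t u -> wf t <-> wf u.
Proof.
  induction 1; simpl; try tauto.
  rewrite !length_app, !fold_right_and_Forall, !Forall_app, !Forall_cons_iff. simpl.
  intuition.
Qed.

Lemma normal_acEq t u : acEq t u -> normal t -> normal u.
Proof.
  intros H Hn s (t' & s' & H1 & H2 & H3). apply (Hn s).
  exists t', s'. eauto using ac_trans.
Qed.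

Definition ok (t : tm) : Prop := wf t /\ normal t.

Lemma ok_acEq t u : acEq t u -> ok t -> ok u.
Proof. intros H [Hw Hn]. split; [exact (proj1 (wf_acEq H) Hw)|exact (normal_acEq H Hn)]. Qed.

Lemma deriv_ok c G M : deriv T c G M -> Forall ok G /\ ok M.
Proof.
  destruct 1; match goal with Hs : seq_ok _ _ _ |- _ => destruct Hs as (? & ? & ?) end.
  all: split; [|split]; assumption.
Qed.

Lemma subterm_trans a b c : subterm a b -> subterm b c -> subterm a c.
Proof. intros Hab Hbc. induction Hbc; eauto using Defs.subterm. Qed.

Definition args (t : tm) : list tm :=
  match t with
  | Name _ => []
  | Pub a => [a]
  | Sign a b | Blind a b | Pair a b | Enc a b => [a; b]
  | App _ ts => ts
  end.

Lemma subterm_args_inv A t : subterm A t -> A = t \/ exists u, In u (args t) /\ subterm A u.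
Proof. destruct 1; simpl; eauto 6. Qed.

Lemma subterm_arg A u t : In u (args t) -> subterm A u -> subterm A t.
Proof.
  intros Hu HA. destruct t; simpl in Hu;
    repeat (destruct Hu as [<-|Hu]; [eauto using Defs.subterm|]); try contradiction.
  eauto using Defs.subterm.
Qed.

Definition covered (Us : list tm) (t : tm) : Prop :=
  forall A, guarded A -> subterm A t ->
  exists u A', In u Us /\ subterm A' u /\ acEq A A'.

Lemma covered_subterm Us t u : In u Us -> subterm t u -> covered Us t.
Proof.
  intros Hu Htu A _ HA. exists u, A.
  split; [|split]; eauto using subterm_trans, ac_refl.
Qed.

Lemma covered_self t : covered [t] t.
Proof. apply covered_subterm with t; [left; reflexivity|apply st_refl]. Qed.

Lemma covered_incl Us Vs t : covered Us t -> incl Us Vs -> covered Vs t.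
Proof.
  intros Ht Hincl A HgA HA. destruct (Ht A HgA HA) as (u & A' & Hu & HA' & E).
  exists u, A'. auto.
Qed.

Lemma covered_trans Us Vs t :
  covered Us t -> (forall u, In u Us -> covered Vs u) -> covered Vs t.
Proof.
  intros Ht HUs A HgA HA. destruct (Ht A HgA HA) as (u & A' & Hu & HA' & E).
  destruct (HUs u Hu A' (guarded_acEq E HgA) HA') as (v & A'' & Hv & HA'' & E').
  exists v, A''. eauto using ac_trans.
Qed.

Lemma covered_intro Us t :
  (guarded t -> exists u A', In u Us /\ subterm A' u /\ acEq t A') ->
  (forall a, In a (args t) -> covered Us a) -> covered Us t.
Proof.
  intros Hroot Hargs A HgA HA.
  destruct (subterm_args_inv HA) as [->|(a & Ha & HAa)]; auto.
  exact (Hargs a Ha A HgA HAa).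
Qed.

Lemma covered_by_args t u : acEq t u ->
  (forall a, In a (args t) -> exists b, In b (args u) /\ covered [b] a) ->
  covered [u] t.
Proof.
  intros Htu Hargs. apply covered_intro.
  - intros _. exists u, u. split; [left; reflexivity|split; [apply st_refl|exact Htu]].
  - intros a Ha. destruct (Hargs a Ha) as (b & Hb & Hab).
    apply (covered_trans Hab). intros v [<-|[]].
    apply covered_subterm with u; [left; reflexivity|].
    apply subterm_arg with b; auto using st_refl.
Qed.

Local Ltac ac_congruence :=
  first [apply ac_pub | apply ac_sign | apply ac_blind | apply ac_pair | apply ac_enc
        | apply ac_app | apply ac_comm]; auto using ac_sym.

Local Ltac match_args :=
  simpl; intros ? Hx; repeat destruct Hx as [<-|Hx]; try contradiction;
  eexists; (split; [|first [eassumption|apply covered_self]]); simpl; auto.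

Lemma covered_acEq_both t u : acEq t u -> covered [u] t /\ covered [t] u.
Proof.
  induction 1 as [t|t u _ IH|t u v _ [IH1 IH2] _ [IH3 IH4]|a b Hab [IH1 IH2]
    | a b c d Hab [IH1 IH2] Hcd [IH3 IH4] | a b c d Hab [IH1 IH2] Hcd [IH3 IH4]
    | a b c d Hab [IH1 IH2] Hcd [IH3 IH4] | a b c d Hab [IH1 IH2] Hcd [IH3 IH4]
    | f l a b r Hab [IH1 IH2] | f a b Hf | f a b c Hf].
  4-8, 10: split; apply covered_by_args; [ac_congruence|match_args|ac_congruence|match_args].
  - split; apply covered_self.
  - tauto.
  - split; eapply covered_trans; eauto; intros w [<-|[]]; assumption.
  - split; apply covered_by_args; try ac_congruence;
      simpl; intros x Hx; apply in_app_or in Hx as [Hx|[<-|Hx]];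
      try (exists x; split; [apply in_or_app; simpl; auto|apply covered_self]);
      eexists; (split; [apply in_or_app; right; left; reflexivity|assumption]).
  - split; apply covered_intro; simpl; try contradiction;
      intros x Hx; repeat destruct Hx as [<-|Hx]; try contradiction;
      try (apply covered_subterm with (1 := in_eq _ _);
           eauto 6 using Defs.subterm, in_eq, in_cons; fail);
      apply covered_intro; simpl; try contradiction;
      intros y Hy; repeat destruct Hy as [<-|Hy]; try contradiction;
      apply covered_subterm with (1 := in_eq _ _); eauto 6 using Defs.subterm, in_eq, in_cons.
Qed.

Lemma covered_acEq Us t u : acEq t u -> covered Us t -> covered Us u.
Proof.
  intros Htu Ht. apply (covered_trans (proj2 (covered_acEq_both Htu))).
  intros v [<-|[]]. exact Ht.
Qed.

Lemma step_below_subterm a t a' b : subterm a t -> acEq a a' -> cstep a' b ->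
  exists t' s, acEq t t' /\ cstep t' s.
Proof.
  induction 1 as [t|a t _ IH|a t u _ IH|a t u _ IH|a t u _ IH|a t u _ IH
    |a t u _ IH|a t u _ IH|a t u _ IH|a t u _ IH|a f ts t Hin _ IH];
    intros Ha Hstep; [eauto|..]; destruct (IH Ha Hstep) as (t0 & s0 & Ht0 & Hs0).
  - exists (Pub t0), (Pub s0). split; constructor; assumption.
  - exists (Sign t0 u), (Sign s0 u). split; [apply ac_sign|apply cs_sign1]; auto using ac_refl.
  - exists (Sign t t0), (Sign t s0). split; [apply ac_sign|apply cs_sign2]; auto using ac_refl.
  - exists (Blind t0 u), (Blind s0 u). split; [apply ac_blind|apply cs_blind1]; auto using ac_refl.
  - exists (Blind t t0), (Blind t s0). split; [apply ac_blind|apply cs_blind2]; auto using ac_refl.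
  - exists (Pair t0 u), (Pair s0 u). split; [apply ac_pair|apply cs_pair1]; auto using ac_refl.
  - exists (Pair t t0), (Pair t s0). split; [apply ac_pair|apply cs_pair2]; auto using ac_refl.
  - exists (Enc t0 u), (Enc s0 u). split; [apply ac_enc|apply cs_enc1]; auto using ac_refl.
  - exists (Enc t t0), (Enc t s0). split; [apply ac_enc|apply cs_enc2]; auto using ac_refl.
  - apply in_split in Hin as (l & r & ->).
    exists (App f (l ++ t0 :: r)), (App f (l ++ s0 :: r)).
    split; [apply ac_app|apply cs_app]; assumption.
Qed.

Lemma normal_subterm a t : subterm a t -> normal t -> normal a.
Proof.
  intros Hat Ht b (a' & b' & Ha & Hstep & _).
  destruct (step_below_subterm Hat Ha Hstep) as (t' & s' & Ht' & Hs').
  apply (Ht s'). exists t', s'. auto using ac_refl.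
Qed.

Lemma subterm_inst_var (s : nat -> tm) p x : In x (pvars p) -> subterm (s x) (inst s p).
Proof.
  induction p as [i|f ps IH] using pat_nested_ind; simpl; intros Hx.
  - destruct Hx as [<-|[]]. apply st_refl.
  - apply in_flat_map in Hx as (q & Hq & Hx). rewrite Forall_forall in IH.
    eapply st_app; [apply in_map; eassumption|]. auto.
Qed.

Lemma subterm_inst_guarded (s : nat -> tm) p A : guarded A -> subterm A (inst s p) ->
  exists x, In x (pvars p) /\ subterm A (s x).
Proof.
  induction p as [i|f ps IH] using pat_nested_ind; simpl; intros Hg HA; eauto.
  inversion HA as [| | | | | | | | | |? ? ? q Hq HAq]; subst; [contradiction|].
  apply in_map_iff in Hq as (q0 & <- & Hq0). rewrite Forall_forall in IH.
  destruct (IH q0 Hq0 Hg HAq) as (x & Hx & HAx).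
  exists x. split; auto. apply in_flat_map. eauto.
Qed.

Lemma covered_guarded_normal Xs t :
  Forall normal Xs -> covered Xs t -> guarded t -> normal t.
Proof.
  intros HXs Ht Hg. destruct (Ht t Hg (st_refl _ _)) as (u & A & Hu & HA & E).
  rewrite Forall_forall in HXs.
  exact (normal_acEq (ac_sym E) (normal_subterm HA (HXs u Hu))).
Qed.

(* Choosing the instance of the extra variables of a rule (those of [r]
   not in [l]) to be the redex itself keeps the reduct covered. *)
Lemma covered_step Xs t u : Forall normal Xs -> cstep t u -> covered Xs t ->
  exists u', cstep t u' /\ covered Xs u'.
Proof.
  intros HXs Hstep. induction Hstep as [l r s Hlr| | | | | | | | | |f l a b r Hab IH];
    intros Ht.
  2-10: exfalso; refine (covered_guarded_normal HXs Ht I _);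
    do 2 eexists; (split; [apply ac_refl|split; [constructor; eassumption|apply ac_refl]]).
  - set (s' := fun x => if in_dec Nat.eq_dec x (pvars l) then s x else inst s l).
    assert (Hl : inst s' l = inst s l).
    { apply inst_ext. intros i Hi. unfold s'. destruct in_dec; [reflexivity|contradiction]. }
    exists (inst s' r). split; [rewrite <- Hl; apply cs_root; exact Hlr|].
    intros A Hg HA. destruct (subterm_inst_guarded _ _ Hg HA) as (x & _ & HAx).
    apply Ht; auto. unfold s' in HAx. destruct in_dec; [|exact HAx].
    eapply subterm_trans; [exact HAx|]. apply subterm_inst_var. assumption.
  - destruct IH as (b' & Hab' & Hb').
    { apply covered_trans with [App f (l ++ a :: r)]; [|intros v [<-|[]]; exact Ht].
      apply covered_subterm with (1 := in_eq _ _).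
      eapply st_app; [apply in_or_app; right; left; reflexivity|apply st_refl]. }
    exists (App f (l ++ b' :: r)). split; [apply cs_app; exact Hab'|].
    apply covered_intro; [simpl; contradiction|].
    simpl. intros x Hx. apply in_app_or in Hx as [Hx|[<-|Hx]]; [| exact Hb' |];
      apply covered_trans with [App f (l ++ a :: r)]; try (intros v [<-|[]]; exact Ht);
      apply covered_subterm with (1 := in_eq _ _); eapply st_app; eauto using st_refl, in_or_app, in_cons.
Qed.

Lemma covered_normal_form Xs t : Forall normal Xs -> terminating_AC T (rules T) ->
  covered Xs t -> exists N, rewrites t N /\ normal N /\ covered Xs N.
Proof.
  intros HXs Hterm. induction t as [t IH] using (well_founded_induction Hterm). intros Ht.
  destruct (classic (normal t)) as [Hn|Hn]; [exists t; auto using rt_refl|].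
  apply not_all_ex_not in Hn as [s Hs]. apply NNPP in Hs as (t' & s' & Htt' & Hstep & _).
  destruct (covered_step HXs Hstep (covered_acEq Htt' Ht)) as (u & Hu & Hcov).
  assert (Htu : rstep T (rules T) t u) by (exists t', u; auto using ac_refl).
  destruct (IH u Htu Hcov) as (N & HuN & HN & HcovN).
  exists N. split; [eapply rt_trans; [apply rt_step|]; eassumption|auto].
Qed.

Lemma rewrites_from_normal N u : normal N -> rewrites N u -> u = N.
Proof.
  intros HN H. induction H as [x y Hxy| |x y z _ IH1 _ IH2]; auto.
  - destruct (HN y Hxy).
  - specialize (IH1 HN). subst. auto.
Qed.

Lemma normal_forms_acEq t N1 N2 : confluent_AC T (rules T) ->
  rewrites t N1 -> normal N1 -> rewrites t N2 -> normal N2 -> acEq N1 N2.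
Proof.
  intros Hconf H1 HN1 H2 HN2. destruct (Hconf _ _ _ H1 H2) as (u1 & u2 & Hu1 & Hu2 & E).
  rewrite (rewrites_from_normal HN1 Hu1), (rewrites_from_normal HN2 Hu2) in E. exact E.
Qed.

Lemma covered_normal_form_args Xs f N : Forall ok Xs ->
  terminating_AC T (rules T) -> confluent_AC T (rules T) ->
  rewrites (App f Xs) N -> normal N -> covered Xs N.
Proof.
  intros HXs Hterm Hconf HrtN HN.
  assert (HXn : Forall normal Xs) by exact (Forall_impl _ (fun X (HX : ok X) => proj2 HX) HXs).
  assert (Hcov : covered Xs (App f Xs)).
  { apply covered_intro; [simpl; contradiction|]. intros X HX.
    apply covered_subterm with X; [exact HX|apply st_refl]. }
  destruct (covered_normal_form HXn Hterm Hcov) as (N0 & HrtN0 & HN0 & HcovN0).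
  exact (covered_acEq (normal_forms_acEq Hconf HrtN0 HN0 HrtN HN) HcovN0).
Qed.

Lemma rewrites_eqE t u : rewrites t u -> eqE t u.
Proof.
  induction 1 as [t u (t' & u' & H1 & H2 & H3)| |]; [|apply rst_refl|eapply rst_trans; eassumption].
  eapply rst_trans; [apply rst_step; left; exact H1|].
  eapply rst_trans; [apply rst_step; right; exact H2|].
  apply rst_step; left; exact H3.
Qed.

Definition available (G' : list tm) (t : tm) : Prop :=
  (exists t', In t' G' /\ acEq t t') \/ (id_cond G' t /\ covered G' t).

Lemma available_incl G' G1 t : available G' t -> incl G' G1 -> available G1 t.
Proof.
  intros [(t' & Hin & E)|[Hid Hcov]] Hincl.
  - left. exists t'. auto.
  - right. split; [exact (id_cond_incl Hid Hincl)|exact (covered_incl Hcov Hincl)].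
Qed.

Lemma available_id_cond G' t : available G' t -> id_cond G' t.
Proof. intros [(t' & Hin & E)|[Hid _]]; [exact (id_cond_acEq_mem _ Hin E)|exact Hid]. Qed.

Lemma available_covered G' t : available G' t -> covered G' t.
Proof.
  intros [(t' & Hin & E)|[_ Hcov]]; [|exact Hcov].
  apply covered_incl with [t']; [exact (proj1 (covered_acEq_both E))|].
  intros x [<-|[]]. exact Hin.
Qed.

Lemma available_of_incl G G' : incl G G' -> Forall (available G') G.
Proof.
  intros Hincl. apply Forall_forall. intros t Ht. left. exists t. auto using ac_refl.
Qed.

Lemma extend_available G G' G1 ps ps' :
  Forall (available G') G -> incl G' G1 -> Forall2 acEq ps ps' ->
  Forall (available (ps' ++ G1)) (ps ++ G).
Proof.
  intros HG Hincl Hps. induction Hps as [|p p' ps ps' E _ IH]; simpl.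
  - eapply Forall_impl; [|exact HG]. intros t Ht. exact (available_incl Ht Hincl).
  - constructor.
    + left. exists p'. split; [left; reflexivity|exact E].
    + eapply Forall_impl; [|exact IH]. intros t Ht.
      apply (available_incl Ht). intros x Hx. right. exact Hx.
Qed.

Lemma extend_ok G G1 ps ps' :
  Forall2 acEq ps ps' -> Forall ok (ps ++ G) -> Forall ok G1 -> Forall ok (ps' ++ G1).
Proof.
  intros Hps HG HG1. induction Hps as [|p p' ps ps' E _ IH]; simpl in *; auto.
  inversion HG; subst. constructor; eauto using ok_acEq.
Qed.

Definition transportable (G : list tm) (M : tm) : Prop :=
  forall G' M', Forall (available G') G -> acEq M M' -> Forall ok G' -> deriv T false G' M'.

(* A principal formula that is only derivable from [G'] is a guarded subterm
   of [G'] up to AC, so the rule (gs) brings it into the context. *)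
Lemma available_principal G' t U :
  available G' t -> guarded t -> ok t -> Forall ok G' -> ok U ->
  (forall t' G1, acEq t t' -> In t' G1 -> incl G' G1 -> Forall ok G1 ->
     deriv T false G1 U) ->
  deriv T false G' U.
Proof.
  intros [(t' & Hin & E)|[Hid Hcov]] Hg Hok HG' HU Hprem.
  - apply (Hprem t' G'); auto using incl_refl.
  - destruct (Hcov t Hg (st_refl _ _)) as (u & A & Hu & HAu & E).
    pose proof (ok_acEq E Hok) as HA.
    apply d_gs with A.
    + exact (conj HG' HU).
    + exact (guarded_acEq E Hg).
    + exists u. auto.
    + apply d_id; [exact (conj HG' HA)|].
      apply id_cond_eqE with t; [apply rst_step; left; apply ac_sym; exact E|exact Hid].
    + apply (Hprem A); auto using in_eq, incl_tl, incl_refl.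
Qed.


Lemma transport_id G U : Forall ok G -> ok U -> id_cond G U -> transportable G U.
Proof.
  intros HG HU Hid G' U' Hav HUU' HG'.
  apply d_id; [exact (conj HG' (ok_acEq HUU' HU))|].
  apply id_cond_eqE with U; [apply rst_step; left; apply ac_sym; exact HUU'|].
  apply id_cond_cut_all with G.
  - intros t Ht. rewrite Forall_forall in Hav. exact (available_id_cond (Hav t Ht)).
  - apply id_cond_incl with G; [exact Hid|]. intros x Hx. apply in_or_app. left. exact Hx.
Qed.

Definition ac_binary (C : tm -> tm -> tm) : Prop :=
  forall a b u, acEq (C a b) u -> exists a' b', u = C a' b' /\ acEq a a' /\ acEq b b'.

Local Ltac prove_ac_inversion :=
  intros until 1; match goal with Hu : Defs.acEq _ _ ?u |- _ =>
    pose proof (acEq_shape Hu) as Hs; destruct u; simpl in Hs; try contradiction;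
    eauto; destruct Hs; eauto end.

Lemma ac_binary_Pair : ac_binary (@Pair _). Proof. prove_ac_inversion. Qed.
Lemma ac_binary_Enc : ac_binary (@Enc _). Proof. prove_ac_inversion. Qed.
Lemma ac_binary_Sign : ac_binary (@Sign _). Proof. prove_ac_inversion. Qed.
Lemma ac_binary_Blind : ac_binary (@Blind _). Proof. prove_ac_inversion. Qed.

Lemma acEq_Pub_inv a u : acEq (Pub a) u -> exists a', u = Pub a' /\ acEq a a'.
Proof. prove_ac_inversion. Qed.

Lemma transport_right (C : tm -> tm -> tm) G a b :
  ac_binary C ->
  (forall G' a' b', seq_ok T G' (C a' b') -> deriv T false G' a' ->
     deriv T false G' b' -> deriv T false G' (C a' b')) ->
  ok (C a b) -> transportable G a -> transportable G b -> transportable G (C a b).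
Proof.
  intros Hinv Hrule Hok IHa IHb G' U' Hav HU HG'.
  destruct (Hinv _ _ _ HU) as (a' & b' & -> & Ha & Hb).
  apply Hrule; [exact (conj HG' (ok_acEq HU Hok))|apply IHa|apply IHb]; assumption.
Qed.

Lemma transport_pL G a b U :
  In (Pair a b) G -> Forall ok G -> ok U -> Forall ok (a :: b :: G) ->
  transportable (a :: b :: G) U -> transportable G U.
Proof.
  intros Hin HG HU Hprem IH G' U' Hav HUU' HG'.
  pose proof (ok_acEq HUU' HU) as HU'.
  apply (available_principal (Forall_In Hav Hin) I (Forall_In HG Hin) HG' HU').
  intros t' G1 Ht' Hin1 Hincl HG1. destruct (ac_binary_Pair Ht') as (a' & b' & -> & Ha & Hb).
  apply d_pL with a' b'; [exact (conj HG1 HU')|exact Hin1|].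
  assert (Hps : Forall2 acEq [a; b] [a'; b']) by auto.
  apply IH; [exact (extend_available Hav Hincl Hps)|exact HUU'|].
  exact (extend_ok _ Hps Hprem HG1).
Qed.


(* Covers both (e_L) and (blind_L1). *)
Lemma transport_open (C : tm -> tm -> tm) G a K U :
  ac_binary C -> guarded (C a K) ->
  (forall G1 a' K' U', seq_ok T G1 U' -> In (C a' K') G1 -> deriv T false G1 K' ->
     deriv T false (a' :: K' :: G1) U' -> deriv T false G1 U') ->
  In (C a K) G -> Forall ok G -> ok U -> Forall ok (a :: K :: G) ->
  transportable G K -> transportable (a :: K :: G) U -> transportable G U.
Proof.
  intros Hinv Hg Hrule Hin HG HU Hprem IHK IH G' U' Hav HUU' HG'.
  pose proof (ok_acEq HUU' HU) as HU'.
  apply (available_principal (Forall_In Hav Hin) Hg (Forall_In HG Hin) HG' HU').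
  intros t' G1 Ht' Hin1 Hincl HG1. destruct (Hinv _ _ _ Ht') as (a' & K' & -> & Ha & HK).
  apply Hrule with a' K'; [exact (conj HG1 HU')|exact Hin1| |].
  - apply IHK; [|exact HK|exact HG1].
    eapply Forall_impl; [|exact Hav]. intros t Ht. exact (available_incl Ht Hincl).
  - assert (Hps : Forall2 acEq [a; K] [a'; K']) by auto.
    apply IH; [exact (extend_available Hav Hincl Hps)|exact HUU'|].
    exact (extend_ok _ Hps Hprem HG1).
Qed.

Lemma transport_signL G a K L U :
  In (Sign a K) G -> In (Pub L) G -> acEq K L ->
  Forall ok G -> ok U -> Forall ok (a :: G) ->
  transportable (a :: G) U -> transportable G U.
Proof.
  intros Hin HinL HKL HG HU Hprem IH G' U' Hav HUU' HG'.
  pose proof (ok_acEq HUU' HU) as HU'.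
  apply (available_principal (Forall_In Hav Hin) I (Forall_In HG Hin) HG' HU').
  intros t' G1 Ht' Hin1 Hincl HG1.
  destruct (ac_binary_Sign Ht') as (a' & K' & -> & Ha & HK).
  apply (available_principal (available_incl (Forall_In Hav HinL) Hincl) I
           (Forall_In HG HinL) HG1 HU').
  intros t2 G2 Ht2 Hin2 Hincl2 HG2. destruct (acEq_Pub_inv Ht2) as (L' & -> & HL).
  apply d_signL with a' K' L'; [exact (conj HG2 HU')|exact (Hincl2 _ Hin1)|exact Hin2| |].
  - eauto using ac_trans, ac_sym.
  - assert (Hps : Forall2 acEq [a] [a']) by auto.
    apply IH; [|exact HUU'|exact (extend_ok _ Hps Hprem HG2)].
    apply (extend_available Hav (incl_tran Hincl Hincl2) Hps).
Qed.

Lemma transport_blindL2 G a R K U :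
  In (Sign (Blind a R) K) G -> Forall ok G -> ok U -> Forall ok (Sign a K :: R :: G) ->
  transportable G R -> transportable (Sign a K :: R :: G) U -> transportable G U.
Proof.
  intros Hin HG HU Hprem IHR IH G' U' Hav HUU' HG'.
  pose proof (ok_acEq HUU' HU) as HU'.
  apply (available_principal (Forall_In Hav Hin) I (Forall_In HG Hin) HG' HU').
  intros t' G1 Ht' Hin1 Hincl HG1.
  destruct (ac_binary_Sign Ht') as (B & K' & -> & HB & HK).
  destruct (ac_binary_Blind HB) as (a' & R' & -> & Ha & HR).
  apply d_blindL2 with a' R' K'; [exact (conj HG1 HU')|exact Hin1| |].
  - apply IHR; [|exact HR|exact HG1].
    eapply Forall_impl; [|exact Hav]. intros t Ht. exact (available_incl Ht Hincl).
  - assert (Hps : Forall2 acEq [Sign a K; R] [Sign a' K'; R']) by auto using ac_sign.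
    apply IH; [exact (extend_available Hav Hincl Hps)|exact HUU'|].
    exact (extend_ok _ Hps Hprem HG1).
Qed.

Lemma transport_gs G U A :
  guarded A -> (exists t, (In t G \/ t = U) /\ subterm A t) ->
  Forall ok G -> ok U -> ok A ->
  transportable G A -> transportable (A :: G) U -> transportable G U.
Proof.
  intros Hg (t & Ht & HAt) HG HU HA IHA IH G' U' Hav HUU' HG'.
  assert (Hcov : covered (U' :: G') t).
  { destruct Ht as [Ht| ->].
    - apply covered_incl with G'; [exact (available_covered (Forall_In Hav Ht))|].
      apply incl_tl, incl_refl.
    - apply covered_incl with [U']; [exact (proj1 (covered_acEq_both HUU'))|].
      intros x [<-|[]]. left. reflexivity. }
  destruct (Hcov A Hg HAt) as (u & A' & Hu & HA'u & HAA').
  apply d_gs with A'.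
  - exact (conj HG' (ok_acEq HUU' HU)).
  - exact (guarded_acEq HAA' Hg).
  - exists u. split; [destruct Hu; auto|exact HA'u].
  - apply IHA; assumption.
  - assert (Hps : Forall2 acEq [A] [A']) by auto.
    apply IH; [exact (extend_available Hav (incl_refl _) Hps)|exact HUU'|].
    exact (extend_ok _ Hps (Forall_cons _ HA HG) HG').
Qed.

Theorem deriv_transport G M : deriv T false G M -> transportable G M.
Proof.
  induction 1 as [G U Hs Hid|G U N Hcut Hs _ _ _ _|G a b U Hs Hin D IH|G a b Hs _ IHa _ IHb
    |G a K U Hs Hin _ IHK D IH|G a K Hs _ IHa _ IHK|G a K L U Hs Hin HinL HKL D IH
    |G a K Hs _ IHa _ IHK|G a K U Hs Hin _ IHK D IH|G a K Hs _ IHa _ IHK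
    |G a R K U Hs Hin _ IHR D IH|G U A Hs Hg Hsub DA IHA _ IH];
    destruct Hs as [HG HU].
  - exact (transport_id HG HU Hid).
  - discriminate.
  - exact (transport_pL Hin HG HU (proj1 (deriv_ok D)) IH).
  - exact (transport_right ac_binary_Pair (@d_pR T false) HU IHa IHb).
  - exact (transport_open ac_binary_Enc I (@d_eL T false) Hin HG HU (proj1 (deriv_ok D)) IHK IH).
  - exact (transport_right ac_binary_Enc (@d_eR T false) HU IHa IHK).
  - exact (transport_signL Hin HinL HKL HG HU (proj1 (deriv_ok D)) IH).
  - exact (transport_right ac_binary_Sign (@d_signR T false) HU IHa IHK).
  - exact (transport_open ac_binary_Blind I (@d_blindL1 T false) Hin HG HU
             (proj1 (deriv_ok D)) IHK IH).
  - exact (transport_right ac_binary_Blind (@d_blindR T false) HU IHa IHK).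
  - exact (transport_blindL2 Hin HG HU (proj1 (deriv_ok D)) IHR IH).
  - exact (transport_gs Hg Hsub HG HU (proj2 (deriv_ok DA)) IHA IH).
Qed.

End Derivations.

Theorem lemma3 (T : theory) (Xs : list (term (sym T))) (f : sym T)
    (G : list (term (sym T))) (M N : term (sym T)) :
  admissible T ->
  length Xs = ar T f ->
  Forall (fun X => wf T X /\ normal T X) Xs ->
  is_nf T (App f Xs) N ->
  deriv T false (N :: G) M ->
  deriv T false (Xs ++ G) M.
Proof.
  intros (_ & _ & _ & Hterm & Hconf) Hlen HXs [HrtN HN] D.
  apply (deriv_transport D); [constructor| apply ac_refl |].
  - right. split.
    + apply (id_cond_incl (G := Xs)); [|apply incl_appl, incl_refl].
      apply id_cond_app_args with f; [exact Hlen|].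
      apply rst_sym, rewrites_eqE. exact HrtN.
    + apply (covered_incl (Us := Xs)); [|apply incl_appl, incl_refl].
      exact (covered_normal_form_args HXs Hterm Hconf HrtN HN).
  - apply available_of_incl, incl_appr, incl_refl.
  - apply Forall_app. split; [exact HXs|exact (Forall_inv_tail (proj1 (deriv_ok D)))].
Qed.
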